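(* Let $\mathfrak{C}$ be a clustering functor on $\mathcal{M}^{gen}$ that is scale invariant: for every finite metric space $(X,d_X)$ and every $\lambda>0$, $\mathfrak{C}(X,\lambda\cdot d_X)=\mathfrak{C}(X,d_X)$. Then either $\mathfrak{C}$ assigns to every finite metric space $X$ the partition of $X$ into singletons, or $\mathfrak{C}$ assigns to every finite metric space $X$ the partition with only one block.
   Context: $\mathcal{M}^{gen}$ is the category whose objects are finite metric spaces and whose morphisms $f:(X,d_X)\to(Y,d_Y)$ are distance non-increasing maps. For a set map $f:X\to Y$ and a partition $P_Y$ of $Y$, $f^*(P_Y)$ is the partition of $X$ with blocks the nonempty sets $f^{-1}(B)$, $B\in P_Y$. A clustering functor on $\mathcal{M}^{gen}$ is a rule $\mathfrak{C}$ assigning to every finite metric space $(X,d_X)$ a partition $\mathfrak{C}(X,d_X)$ of $X$ such that for every morphism $f:X\to Y$, $\mathfrak{C}(X)$ refines $f^*(\mathfrak{C}(Y))$. *)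

From mathcomp Require Import all_boot all_order all_algebra.
From mathcomp Require Import reals.
Set Implicit Arguments. Unset Strict Implicit. Unset Printing Implicit Defensive.
Import Order.TTheory GRing.Theory Num.Theory.
Local Open Scope ring_scope.

Definition is_metric (R : realType) (T : finType) (d : T -> T -> R) : Prop :=
  [/\ forall x y, d x y = 0 <-> x = y,
      forall x y, d x y = d y x
    & forall x y z, d x z <= d x y + d y z].

(* Morphisms of M^gen: distance non-increasing maps. *)
Definition dist_nonincr (R : realType) (T S : finType)
  (dT : T -> T -> R) (dS : S -> S -> R) (f : T -> S) : Prop :=
  forall x y, dS (f x) (f y) <= dT x y.

Definition pullback (T S : finType) (f : T -> S) (P : {set {set S}})
  : {set {set T}} :=
  [set (f @^-1: B : {set T}) | B : {set S} in P] :\ set0.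

Definition refines (T : finType) (P Q : {set {set T}}) : Prop :=
  forall A, A \in P -> exists2 B, B \in Q & A \subset B.

(* A clustering rule: for each finite type T and each function d, a set of
   blocks; only its values on metrics matter. *)
Definition clustering_rule (R : realType) : Type :=
  forall (T : finType), (T -> T -> R) -> {set {set T}}.

Definition is_clustering_functor (R : realType) (C : clustering_rule R) : Prop :=
  (forall (T : finType) (d : T -> T -> R), is_metric d ->
      partition (C T d) [set: T]) /\
  (forall (T S : finType) (dT : T -> T -> R) (dS : S -> S -> R) (f : T -> S),
      is_metric dT -> is_metric dS -> dist_nonincr dT dS f ->
      refines (C T dT) (pullback f (C S dS))).

Definition scale_invariant (R : realType) (C : clustering_rule R) : Prop :=
  forall (T : finType) (d : T -> T -> R) (lam : R), is_metric d -> 0 < lam ->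
    C T (fun x y => lam * d x y) = C T d.

(* The partition into singletons, and the partition with a single block
   (the latter is empty when T is empty). *)
Definition singletons (T : finType) : {set {set T}} := [set [set x] | x : T].
Definition one_block (T : finType) : {set {set T}} := [set [set: T]] :\ set0.

From mathcomp Require Import all_boot all_order all_algebra.
From mathcomp Require Import reals.
From mathcomp Require Import lra.
Set Implicit Arguments.
Import Order.TTheory GRing.Theory Num.Theory.
Local Open Scope ring_scope.

(* Everything is decided on the two-point space with distance [del], whose
   clustering does not depend on [del > 0] by scale invariance.  If its two
   points share a cluster, then so do any two points [x, y] of any space: the
   map [true |-> x, false |-> y] is distance non-increasing when
   [del = d x y], and functoriality transports the cluster.  If they do not,
   then distinct points [x, y] never share a cluster: otherwise the indicator
   of [x] is distance non-increasing onto the two-point space whose [del] is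
   the least positive distance, and would transport that cluster. *)

Section Metrics.

Context {R : realType}.

Lemma metric_ge0 (T : finType) (d : T -> T -> R) x y :
  is_metric d -> 0 <= d x y.
Proof.
case=> d0 dC dT; have := dT x y x.
by rewrite (dC y x) (proj2 (d0 x x) erefl); lra.
Qed.

Lemma metric_gt0 (T : finType) (d : T -> T -> R) {x y : T} :
  is_metric d -> x != y -> 0 < d x y.
Proof.
move=> dm; rewrite lt_def metric_ge0 // andbT; apply: contraNneq.
by case: dm => d0 _ _ /d0 ->.
Qed.

Lemma is_metric_scale (T : finType) (d : T -> T -> R) (lam : R) :
  is_metric d -> 0 < lam -> is_metric (fun x y => lam * d x y).
Proof.
case=> d0 dC dT lam_gt0; split => [x y | x y | x y z].
- split=> [/eqP|/d0->]; last by rewrite mulr0.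
  by rewrite mulf_eq0 gt_eqF //= => /eqP/d0.
- by rewrite dC.
- by rewrite -mulrDr ler_pM2l.
Qed.

Lemma ex_min_dist (T : finType) (d : T -> T -> R) :
  is_metric d -> exists2 m : R, 0 < m & forall x y, x != y -> m <= d x y.
Proof.
move=> dm; exists (\big[Order.min/1]_(p : T * T | p.1 != p.2) d p.1 p.2).
  apply: (big_ind (fun v : R => 0 < v)) => // [u v u0 v0|[x y] /= xy].
    by rewrite lt_min u0 v0.
  exact: metric_gt0 dm xy.
by move=> x y xy; rewrite (bigD1 (x, y)) //= ge_min lexx.
Qed.

Definition discrete_dist {T : finType} (x y : T) : R := (x != y)%:R.

Lemma is_metric_discrete (T : finType) : is_metric (@discrete_dist T).
Proof.
rewrite /discrete_dist; split => [x y | x y | x y z].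
- split=> [|->]; last by rewrite eqxx.
  by case: eqVneq => // _ /eqP; rewrite oner_eq0.
- by rewrite eq_sym.
- case: (eqVneq x y) => [->|_]; first by rewrite add0r.
  by case: (x != z); case: (y != z) => /=; lra.
Qed.

Definition two_point_dist (del : R) (x y : bool) : R :=
  del * discrete_dist x y.

Lemma is_metric_two_point {del : R} : 0 < del -> is_metric (two_point_dist del).
Proof. exact: is_metric_scale (is_metric_discrete bool). Qed.

Lemma dist_nonincr_pair (T : finType) (d : T -> T -> R) (x y : T) :
  is_metric d ->
  dist_nonincr (two_point_dist (d x y)) d (fun b => if b then x else y).
Proof.
case=> d0 dC _ [] [] /=; rewrite /two_point_dist /discrete_dist /=;
  by rewrite ?mulr0 ?mulr1 ?(proj2 (d0 _ _) erefl) // dC.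
Qed.

Lemma dist_nonincr_indicator {T : finType} {d : T -> T -> R} {m : R} (x : T) :
  is_metric d -> (forall a b, a != b -> m <= d a b) ->
  dist_nonincr d (two_point_dist m) (fun z => z == x).
Proof.
move=> dm m_le a b; rewrite /two_point_dist /discrete_dist.
have [->|ab] := eqVneq a b; first by rewrite eqxx mulr0 metric_ge0.
by case: (_ != _); rewrite ?mulr0 ?mulr1 ?metric_ge0 ?m_le.
Qed.

End Metrics.

Section Partitions.

Context {T : finType} {P : {set {set T}}}.
Hypothesis partP : partition P [set: T].

Let coverP : cover P = [set: T].
Proof. by case/and3P: partP => /eqP. Qed.

Let trivP : trivIset P.
Proof. by case/and3P: partP. Qed.

Lemma pblock_in_partition x : pblock P x \in P.
Proof. by rewrite pblock_mem // coverP inE. Qed.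

Lemma mem_pblock_self x : x \in pblock P x.
Proof. by rewrite mem_pblock coverP inE. Qed.

Lemma partition_pblocks : P = [set pblock P x | x : T].
Proof.
apply/setP => A; apply/idP/imsetP => [PA | [x _ ->]]; last first.
  exact: pblock_in_partition.
have /set0Pn[x Ax] : A != set0.
  by apply: contraTneq PA => ->; case/and3P: partP.
by exists x; rewrite // (def_pblock trivP PA Ax).
Qed.

Lemma partition_singletons : (forall x y, y \in pblock P x -> y = x) ->
  P = singletons T.
Proof.
move=> sep; rewrite partition_pblocks /singletons; apply: eq_imset => x.
apply/setP => y; rewrite inE; apply/idP/eqP => [/sep //|->].
exact: mem_pblock_self.
Qed.

Lemma partition_one_block : (forall x y, y \in pblock P x) -> P = one_block T.
Proof.
move=> full; have pblockT x : pblock P x = [set: T].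
  by apply/setP => y; rewrite inE full.
rewrite partition_pblocks /one_block; apply/setP => A.
rewrite !inE; apply/imsetP/andP => [[x _ ->] | [/set0Pn[x _] /eqP->]].
  by rewrite pblockT; split=> //; apply/set0Pn; exists x.
by exists x; rewrite ?pblockT.
Qed.

End Partitions.

Section ClusteringFunctor.

Variables (R : realType) (C : clustering_rule R).
Hypothesis functorC : is_clustering_functor C.
Hypothesis scaleC : scale_invariant C.

Let partC (T : finType) (d : T -> T -> R) :
  is_metric d -> partition (C T d) [set: T].
Proof. exact: functorC.1. Qed.

Lemma pblock_functor {T S : finType} {dT : T -> T -> R} {dS : S -> S -> R}
    {f : T -> S} {x y : T} :
  is_metric dT -> is_metric dS -> dist_nonincr dT dS f ->
  y \in pblock (C T dT) x -> f y \in pblock (C S dS) (f x).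
Proof.
move=> mT mS f_le y_x.
have [_ /setD1P[_ /imsetP[B PB ->]] sub] :=
  functorC.2 _ _ _ _ _ mT mS f_le _ (pblock_in_partition (partC mT) x).
have inB z : z \in pblock (C T dT) x -> f z \in B.
  by move=> /(subsetP sub); rewrite inE.
case/and3P: (partC mS) => _ trivS _.
by rewrite (def_pblock trivS PB (inB x (mem_pblock_self (partC mT) x))) inB.
Qed.

Lemma C_two_point (del : R) : 0 < del ->
  C bool (two_point_dist del) = C bool discrete_dist.
Proof. exact: scaleC (is_metric_discrete bool). Qed.

Definition two_point_clustered : bool :=
  true \in pblock (C bool discrete_dist) false.

Lemma clustered_of_two_point (T : finType) (d : T -> T -> R) x y :
  two_point_clustered -> is_metric d -> y \in pblock (C T d) x.
Proof.
move=> tf dm; have [->|yx] := eqVneq y x.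
  exact: (mem_pblock_self (partC dm)).
have d_gt0 := metric_gt0 dm yx.
have tf' : true \in pblock (C bool (two_point_dist (d y x))) false.
  by rewrite C_two_point.
exact: pblock_functor (is_metric_two_point d_gt0) dm
  (dist_nonincr_pair y x dm) tf'.
Qed.

Lemma separated_of_two_point (T : finType) (d : T -> T -> R) x y :
  ~~ two_point_clustered -> is_metric d -> y \in pblock (C T d) x -> y = x.
Proof.
move=> tf dm y_x; apply/eqP; apply: contraNT tf => yx.
have [m m_gt0 m_le] := ex_min_dist dm.
have := pblock_functor dm (is_metric_two_point m_gt0)
  (dist_nonincr_indicator y dm m_le) y_x.
by rewrite C_two_point // eqxx eq_sym (negbTE yx).
Qed.

End ClusteringFunctor.

Theorem mainTheorem6 (R : realType) (C : clustering_rule R) :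
  is_clustering_functor C -> scale_invariant C ->
  (forall (T : finType) (d : T -> T -> R), is_metric d -> C T d = singletons T)
  \/
  (forall (T : finType) (d : T -> T -> R), is_metric d -> C T d = one_block T).
Proof.
move=> functorC scaleC.
have [tf|tf] := boolP (two_point_clustered C); [right|left] => T d dm.
  apply: partition_one_block; first exact: functorC.1.
  by move=> x y; apply: clustered_of_two_point.
apply: partition_singletons; first exact: functorC.1.
by move=> x y; apply: separated_of_two_point.
Qed.
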